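(* Let $b\geq 1$ be odd, let $n,k$ be positive integers with $k\leq n-2$, and let $\mathbf{s}=s_1\ldots s_k$ be an integer sequence such that the set $\mathbf{s}\,|\,R_n(b)$ is nonempty. Let $\mathbf{t}$ be the $\prec$-last sequence in $\mathbf{s}\,|\,R_n(b)$, and let $M=\min\{b,\max\{s_i\}_{i=1}^k+1\}$. Then: (1) if $\sum_{i=1}^k s_i$ is even and $M$ is odd, then $\mathbf{t}=\mathbf{s}M0\ldots0$; (2) if $\sum_{i=1}^k s_i$ is even and $M$ is even, then $\mathbf{t}=\mathbf{s}M(M+1)0\ldots0$; (3) if $\sum_{i=1}^k s_i$ is odd, then $\mathbf{t}=\mathbf{s}0\ldots0$. (In each case the trailing zeros fill the sequence up to length $n$.)
   Context: A restricted growth function of length $n$ is an integer sequence $s_1\ldots s_n$ with $s_1=0$ and $0\leq s_{i+1}\leq \max\{s_j\}_{j=1}^i+1$ for $1\leq i\leq n-1$; $R_n$ is the set of these. For an integer $b\geq1$, $R_n(b)=\{s_1\ldots s_n\in R_n: \max_i s_i\leq b\}$. For a sequence $\mathbf{u}$ and a set $S$ of sequences, $\mathbf{u}\,|\,S$ denotes the subset of $S$ of sequences having prefix $\mathbf{u}$. The Reflected Gray Code Order $\prec$ on length-$n$ sequences of nonnegative integers: $s_1\ldots s_n\prec t_1\ldots t_n$ if, for the smallest $k$ with $s_k\neq t_k$, either $\sum_{i=1}^{k-1}s_i$ is even and $s_k<t_k$, or $\sum_{i=1}^{k-1}s_i$ is odd and $s_k>t_k$. The $\prec$-last sequence of a set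 is its largest element with respect to $\prec$. *)

(* Sequences are seq nat, indexed from 0 (s_1 = nth 0 s 0). *)
From mathcomp Require Import all_boot.
Set Implicit Arguments. Unset Strict Implicit. Unset Printing Implicit Defensive.

Fixpoint rgf_aux (m : nat) (s : seq nat) : bool :=
  match s with
  | [::] => true
  | x :: s' => (x <= m.+1) && rgf_aux (maxn m x) s'
  end.

(* restricted growth function: s_1 = 0 and s_{i+1} <= max_{j<=i} s_j + 1 *)
Definition is_rgf (s : seq nat) : bool :=
  match s with
  | [::] => true
  | x :: s' => (x == 0) && rgf_aux 0 s'
  end.

Definition in_Rnb (n b : nat) (s : seq nat) : bool :=
  [&& size s == n, is_rgf s & all (fun x => x <= b) s].

Definition in_prefix_Rnb (u : seq nat) (n b : nat) (s : seq nat) : bool :=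
  prefix u s && in_Rnb n b s.

Definition rgc_lt (s t : seq nat) : Prop :=
  size s = size t /\
  exists k, [/\ k < size s, take k s = take k t, nth 0 s k != nth 0 t k &
     if ~~ odd (sumn (take k s)) then nth 0 s k < nth 0 t k
     else nth 0 t k < nth 0 s k].

Definition rgc_last (P : seq nat -> bool) (t : seq nat) : Prop :=
  P t /\ forall u, P u -> u <> t -> rgc_lt u t.

From mathcomp Require Import all_boot zify.
Set Implicit Arguments. Unset Strict Implicit. Unset Printing Implicit Defensive.

(* The members of s | R_n(b) are the s ++ r whose tail r may grow from the
   running maximum max s and is bounded by b.  The claimed sequence s ++ r0 beats
   every other member at their first difference: while the prefix sum is even
   it carries the largest admissible entry (M, and also M + 1 when M is even,
   since the prefix sum then stays even), and once it is odd it carries 0.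
   As the last element of a set is unique, t = s ++ r0. *)

Lemma rgf_aux_cat m s r :
  rgf_aux m (s ++ r) = rgf_aux m s && rgf_aux (foldl maxn m s) r.
Proof. by elim: s m => [|x s IH] m //=; rewrite IH andbA. Qed.

Lemma foldl_maxn m s : foldl maxn m s = maxn m (\max_(x <- s) x).
Proof.
elim: s m => [|x s IH] m /=; first by rewrite big_nil maxn0.
by rewrite IH big_cons maxnA.
Qed.

Lemma is_rgf_cat s r : 0 < size s ->
  is_rgf (s ++ r) = is_rgf s && rgf_aux (\max_(x <- s) x) r.
Proof.
case: s => [|x s] //= _; case: eqP => [->|] //=.
by rewrite rgf_aux_cat foldl_maxn big_cons !max0n.
Qed.

Lemma rgf_aux_nseq0 m L : rgf_aux m (nseq L 0).
Proof. by elim: L m => //= L IH m; rewrite IH. Qed.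

Lemma in_prefix_Rnb_cat s r n b : 0 < size s ->
  in_prefix_Rnb s n b (s ++ r) =
  [&& size s + size r == n, is_rgf s, all (fun x => x <= b) s,
      rgf_aux (\max_(x <- s) x) r & all (fun x => x <= b) r].
Proof.
move=> s_gt0; rewrite /in_prefix_Rnb /in_Rnb prefixE take_size_cat //= eqxx /=.
by rewrite size_cat is_rgf_cat // all_cat andbACA !andbA.
Qed.

Lemma in_prefix_Rnb_split s n b u :
  in_prefix_Rnb s n b u -> u = s ++ drop (size s) u.
Proof. by case/andP; rewrite prefixE => /eqP {1}<- _; rewrite cat_take_drop. Qed.

Lemma rgc_lt_irrefl s : ~ rgc_lt s s.
Proof. by case=> _ [k [_ _ /eqP]]. Qed.

Lemma rgc_lt_cat_cons u x y r r' : x != y ->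
  rgc_lt (u ++ x :: r) (u ++ y :: r') ->
  if ~~ odd (sumn u) then x < y else y < x.
Proof.
move=> /negbTE neq_xy [_ [k [_ eq_take neq_nth]]].
have [lt_ku | lt_uk | ->] := ltngtP k (size u).
- by rewrite !nth_cat lt_ku eqxx in neq_nth.
- move/(congr1 (nth 0 ^~ (size u))): eq_take.
  by rewrite !nth_take // !nth_cat ltnn subnn /= => /eqP; rewrite neq_xy.
- by rewrite !take_size_cat // !nth_cat ltnn subnn.
Qed.

Lemma rgc_lt_nseq0_odd u L r : odd (sumn u) -> ~ rgc_lt (u ++ nseq L 0) (u ++ r).
Proof.
elim: L u r => [|L IH] u [|y r] odd_u lt_ur.
- exact: rgc_lt_irrefl lt_ur.
- by case: lt_ur; rewrite !size_cat /=; lia.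
- by case: lt_ur; rewrite !size_cat /=; lia.
have [eq_0y | neq_0y] := eqVneq 0 y.
  by move: lt_ur; rewrite -eq_0y -!cat_rcons; apply: IH; rewrite sumn_rcons addn0.
by have := rgc_lt_cat_cons neq_0y lt_ur; rewrite odd_u.
Qed.

Lemma rgc_last_eq (P : seq nat -> bool) t c :
  rgc_last P t -> P c -> (forall u, P u -> ~ rgc_lt c u) -> t = c.
Proof.
move=> [Pt t_last] Pc c_max; have [//|neq_tc] := eqVneq t c.
by case: (c_max t Pt); apply: t_last => // eq_ct; rewrite eq_ct eqxx in neq_tc.
Qed.

Lemma rgc_last_prefix_Rnb s n b t r0 : 0 < size s ->
  rgc_last (in_prefix_Rnb s n b) t -> in_prefix_Rnb s n b (s ++ r0) ->
  (forall r, rgf_aux (\max_(x <- s) x) r -> all (fun x => x <= b) r ->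
     ~ rgc_lt (s ++ r0) (s ++ r)) ->
  t = s ++ r0.
Proof.
move=> s_gt0 t_last r0_in r0_max; apply: (rgc_last_eq t_last r0_in) => u u_in.
have u_eq := in_prefix_Rnb_split u_in.
move: u_in; rewrite u_eq in_prefix_Rnb_cat //.
by case/and5P => _ _ _; apply: r0_max.
Qed.

Lemma rgc_lt_head_minn u m b L r :
  ~~ odd (sumn u) -> odd (minn b m.+1) -> rgf_aux m r -> all (fun x => x <= b) r ->
  ~ rgc_lt (u ++ minn b m.+1 :: nseq L 0) (u ++ r).
Proof.
set M := minn b m.+1 => even_u odd_M.
case: r => [|y r] /=; first by move=> _ _ [+ _]; rewrite !size_cat /=; lia.
case/andP => le_y_m1 _ /andP [le_yb _] lt_ur.
have le_yM : y <= M by rewrite leq_min le_yb.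
have [eq_My | neq_My] := eqVneq M y; last first.
  by have := rgc_lt_cat_cons neq_My lt_ur; rewrite even_u ltnNge le_yM.
move: lt_ur; rewrite -eq_My -!cat_rcons; apply: rgc_lt_nseq0_odd.
by rewrite sumn_rcons oddD (negbTE even_u) odd_M.
Qed.

Lemma rgc_lt_head_succ_succ u m L r :
  ~~ odd (sumn u) -> ~~ odd m.+1 -> rgf_aux m r ->
  ~ rgc_lt (u ++ m.+1 :: m.+2 :: nseq L 0) (u ++ r).
Proof.
move=> even_u even_m1.
case: r => [|y [|z r]] /=; try by move=> _ [+ _]; rewrite !size_cat /=; lia.
case/and3P => le_y le_z _ lt_ur.
have [eq_y | neq_y] := eqVneq m.+1 y; last first.
  by have := rgc_lt_cat_cons neq_y lt_ur; rewrite even_u ltnNge le_y.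
move: lt_ur le_z; rewrite -eq_y -!(cat_rcons m.+1 u) => lt_ur le_z.
have even_um1 : ~~ odd (sumn (rcons u m.+1)).
  by rewrite sumn_rcons oddD (negbTE even_u) (negbTE even_m1).
have [eq_z | neq_z] := eqVneq m.+2 z; last first.
  by have := rgc_lt_cat_cons neq_z lt_ur; rewrite even_um1; lia.
move: lt_ur; rewrite -eq_z -!cat_rcons; apply: rgc_lt_nseq0_odd.
by move: even_m1; rewrite sumn_rcons oddD (negbTE even_um1) /= negbK.
Qed.

Theorem proposition1 (b n k : nat) (s t : seq nat) :
  0 < b -> odd b -> 0 < k -> k + 2 <= n -> size s = k ->
  (exists u, in_prefix_Rnb s n b u) ->
  rgc_last (in_prefix_Rnb s n b) t ->
  let M := minn b (\max_(x <- s) x).+1 in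
  [/\ (~~ odd (sumn s) -> odd M -> t = s ++ M :: nseq (n - k - 1) 0),
      (~~ odd (sumn s) -> ~~ odd M -> t = s ++ M :: M.+1 :: nseq (n - k - 2) 0)
    & (odd (sumn s) -> t = s ++ nseq (n - k) 0)].
Proof.
move=> _ odd_b k_gt0 le_kn size_s [u u_in] t_last M.
have s_gt0 : 0 < size s by rewrite size_s.
have := u_in; rewrite (in_prefix_Rnb_split u_in) in_prefix_Rnb_cat //.
case/and5P => _ rgf_s b_s _ _.
set mx := \max_(x <- s) x in M *.
have mem_cand r0 : size r0 = n - k -> rgf_aux mx r0 -> all (fun x => x <= b) r0 ->
    in_prefix_Rnb s n b (s ++ r0).
  move=> size_r0 rgf_r0 b_r0.
  by rewrite in_prefix_Rnb_cat // rgf_s b_s rgf_r0 b_r0 andbT; lia.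
split.
- move=> even_s odd_M; apply: rgc_last_prefix_Rnb s_gt0 t_last _ _.
    apply: mem_cand => /=; rewrite ?size_nseq ?rgf_aux_nseq0 ?all_nseq ?orbT ?andbT; lia.
  by move=> r; apply: rgc_lt_head_minn.
- move=> even_s even_M.
  have eq_M : M = mx.+1 by move: even_M; rewrite /M /minn; case: ltnP; rewrite ?odd_b.
  have lt_Mb : M < b by rewrite ltn_neqAle geq_minl andbT; apply: contraNneq even_M => ->.
  rewrite eq_M in even_M lt_Mb *; apply: rgc_last_prefix_Rnb s_gt0 t_last _ _.
    apply: mem_cand => /=; rewrite ?size_nseq ?rgf_aux_nseq0 ?all_nseq ?orbT ?andbT; lia.
  by move=> r + _; apply: rgc_lt_head_succ_succ.
- move=> odd_s; apply: rgc_last_prefix_Rnb s_gt0 t_last _ _.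
    by apply: mem_cand; rewrite ?size_nseq ?rgf_aux_nseq0 ?all_nseq ?orbT.
  by move=> r _ _; apply: rgc_lt_nseq0_odd.
Qed.
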